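(* An ideal $\mathcal I$ on $\mathbb N$ has the property of long intervals if and only if, for every increasing sequence $(n_k)$ of positive integers, there is an increasing sequence $(m_k)$ of positive integers such that $$\bigcup_{k\in\mathbb N}\{m_k,m_k+1,\ldots,m_k+n_k-1\} \in\mathcal I\quad\text{and}\quad m_k+n_k-1<m_{k+1}\ \text{ for all }k\in\mathbb N.$$
   Context: $\mathbb N=\{1,2,\dots\}$. An ideal on $\mathbb N$ is a family $\mathcal I\subset\mathcal P(\mathbb N)$ closed under finite unions and subsets, with $\mathbb N\notin\mathcal I$ and containing all finite subsets of $\mathbb N$. An ideal $\mathcal I$ on $\mathbb N$ has the property of long intervals (PLI) if there exists a sequence $(m(n))_{n\in\mathbb N}$ of positive integers such that $\bigcup_{n\in\mathbb N}\{m(n),m(n)+1,\ldots,m(n)+n-1\}\in\mathcal I$. *)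

(* Subsets of N = {1,2,...} are predicates on nat contained in
   the positive naturals; an ideal is a family of such predicates. *)
From Stdlib Require Import Arith.

Definition Npos : nat -> Prop := fun n => 1 <= n.

Definition subset (A B : nat -> Prop) : Prop := forall x, A x -> B x.

Definition finite_set (A : nat -> Prop) : Prop :=
  exists N, forall x, A x -> x < N.

Definition is_ideal (I : (nat -> Prop) -> Prop) : Prop :=
  (forall A, I A -> subset A Npos) /\
  (forall A B, I A -> I B -> I (fun x => A x \/ B x)) /\
  (forall A B, I A -> subset B A -> I B) /\
  ~ I Npos /\
  (forall A, subset A Npos -> finite_set A -> I A).

Definition PLI (I : (nat -> Prop) -> Prop) : Prop :=
  exists m : nat -> nat,
    (forall n, 1 <= n -> 1 <= m n) /\
    I (fun x => exists n, 1 <= n /\ m n <= x /\ x <= m n + n - 1).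

(* If A = U_n [m(n), m(n)+n-1] lies in I, its complement is unbounded, and a
   point x >= 1 outside A forces m(x) > x: otherwise x would lie in the x-th
   interval.  So there are arbitrarily long intervals of A starting
   arbitrarily far out; choosing them greedily, one for each n_k, gives
   separated blocks inside A.  Conversely the case n_k = k+1 is PLI itself. *)
From Stdlib Require Import Arith Lia Classical ClassicalEpsilon.

Section Ideal.

Variable I : (nat -> Prop) -> Prop.
Hypothesis HI : is_ideal I.

Lemma ideal_subset (A B : nat -> Prop) : I A -> subset B A -> I B.
Proof. destruct HI as (_ & _ & HS & _). exact (HS A B). Qed.

Lemma ideal_compl_unbounded (A : nat -> Prop) :
  I A -> forall B, exists x, B < x /\ ~ A x.
Proof.
  destruct HI as (_ & HU & _ & HN & HF).
  intros HA B; apply NNPP; intro Hno.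
  apply HN, ideal_subset with (A := fun x => (1 <= x /\ x <= B) \/ A x).
  - apply HU; [apply HF | exact HA].
    + now intros x [Hx _].
    + exists (S B); intros x [_ Hx]; lia.
  - intros x Hx; destruct (le_lt_dec x B) as [HxB | HBx]; [now left |].
    right; apply NNPP; intro HAx; apply Hno; now exists x.
Qed.

Lemma PLI_starts_unbounded (m : nat -> nat) :
  (forall n, 1 <= n -> 1 <= m n) ->
  I (fun x => exists n, 1 <= n /\ m n <= x /\ x <= m n + n - 1) ->
  forall B, exists n, B < n /\ B < m n.
Proof.
  intros Hm HA B.
  destruct (ideal_compl_unbounded _ HA B) as (x & HBx & Hx).
  exists x; split; [exact HBx |].
  destruct (le_lt_dec (m x) x) as [Hmx | Hmx]; [| lia].
  exfalso; apply Hx; exists x; specialize (Hm x); lia.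
Qed.

End Ideal.

Fixpoint greedy_index (f m nk : nat -> nat) (k : nat) : nat :=
  match k with
  | 0 => f (nk 0)
  | S j => f (m (greedy_index f m nk j) + nk j + nk k)
  end.

Lemma greedy_index_spec (f m nk : nat -> nat) :
  (forall B, B < f B /\ B < m (f B)) ->
  forall k, nk k < greedy_index f m nk k /\
            m (greedy_index f m nk k) + nk k < m (greedy_index f m nk (S k)).
Proof.
  intros Hf k; split.
  - destruct k as [| j]; simpl; [apply Hf |].
    specialize (Hf (m (greedy_index f m nk j) + nk j + nk (S j))); lia.
  - simpl; specialize (Hf (m (greedy_index f m nk k) + nk k + nk (S k))); lia.
Qed.

Lemma PLI_separated_blocks (I : (nat -> Prop) -> Prop) (HI : is_ideal I) :
  PLI I -> forall nk : nat -> nat,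
  exists mk : nat -> nat,
    (forall k, 1 <= mk k) /\ (forall k, mk k + nk k < mk (S k)) /\
    I (fun x => exists k, mk k <= x /\ x <= mk k + nk k - 1).
Proof.
  intros (m & Hm & HA) nk.
  destruct (choice _ (PLI_starts_unbounded I HI m Hm HA)) as [f Hf].
  pose proof (greedy_index_spec f m nk Hf) as Hg.
  exists (fun k => m (greedy_index f m nk k)); split; [| split].
  - intros [| j]; [specialize (Hf (nk 0)) | specialize (Hg j)]; simpl in *; lia.
  - intro k; apply Hg.
  - apply (ideal_subset I HI _ _ HA); intros x (k & Hk).
    exists (greedy_index f m nk k); specialize (Hg k); lia.
Qed.

Lemma PLI_of_blocks (I : (nat -> Prop) -> Prop) (HI : is_ideal I)
  (mk : nat -> nat) :
  (forall k, 1 <= mk k) ->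
  I (fun x => exists k, mk k <= x /\ x <= mk k + S k - 1) -> PLI I.
Proof.
  intros Hmk HA; exists (fun n => mk (n - 1)); split; [intros; apply Hmk |].
  apply (ideal_subset I HI _ _ HA); intros x (n & Hn & Hx).
  exists (n - 1); replace (S (n - 1)) with n by lia; exact Hx.
Qed.

(* Sequences indexed by k in N = {1,2,...} are represented 0-indexed. *)
Theorem fact4p2 (I : (nat -> Prop) -> Prop) (HI : is_ideal I) :
  PLI I <->
  (forall nk : nat -> nat,
     (forall k, 1 <= nk k) -> (forall k, nk k < nk (S k)) ->
     exists mk : nat -> nat,
       (forall k, 1 <= mk k) /\ (forall k, mk k < mk (S k)) /\
       I (fun x => exists k, mk k <= x /\ x <= mk k + nk k - 1) /\
       (forall k, mk k + nk k - 1 < mk (S k))).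
Proof.
  split.
  - intros HPLI nk _ _.
    destruct (PLI_separated_blocks I HI HPLI nk) as (mk & Hmk & Hsep & HA).
    exists mk; repeat split; try assumption; intro k; specialize (Hsep k); lia.
  - intros Hblocks.
    destruct (Hblocks S) as (mk & Hmk & _ & HA & _); try (intro; lia).
    exact (PLI_of_blocks I HI mk Hmk HA).
Qed.
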